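(* Let $X,Z$ be real Banach spaces and $Y\subset X^*$ a closed subspace. Let $T:X\to Z$ be a bounded linear operator such that $T^*$ is an isometric isomorphism from $Z^*$ onto $Y$. Let $\varepsilon>0$ and let $\alpha$ be an ordinal such that $B_{X^*}\cap Y\subset d_\varepsilon^\alpha(B_{X^*})$. Then for every ordinal $\beta$ and every $z\in Z^*$: if $z\in d_\varepsilon^\beta(B_{Z^*})$, then $T^*z\in d_\varepsilon^{\alpha+\beta}(B_{X^*})$.
   Context: For a Banach space $W$, $B_{W^*}$ is the closed unit ball of $W^*$. For $w\in W$, $t\in\mathbb R$, let $H(w,t)=\{w^*\in W^*: w^*(w)>t\}$. For a weak$^*$-compact $K\subset W^*$, a weak$^*$-slice of $K$ is any nonempty set $H(w,t)\cap K$. For $\varepsilon>0$, $d_\varepsilon K$ is $K$ minus the union of all weak$^*$-slices of $K$ of norm diameter less than $\varepsilon$; $d_\varepsilon^0K=K$, $d_\varepsilon^{\beta+1}K=d_\varepsilon(d_\varepsilon^\beta K)$, $d_\varepsilon^\beta K=\bigcap_{\mu<\beta}d_\varepsilon^\mu K$ for limit $\beta$. $\alpha+\beta$ is ordinal addition. *)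

From Stdlib Require Import Reals.
Open Scope R_scope.

Record Banach := mkBanach {
  car :> Type;
  vzero : car;
  vadd : car -> car -> car;
  vopp : car -> car;
  vscal : R -> car -> car;
  vnorm : car -> R;
  vadd_assoc : forall x y z, vadd x (vadd y z) = vadd (vadd x y) z;
  vadd_comm : forall x y, vadd x y = vadd y x;
  vadd_zero : forall x, vadd x vzero = x;
  vadd_opp : forall x, vadd x (vopp x) = vzero;
  vscal_one : forall x, vscal 1 x = x;
  vscal_assoc : forall a b x, vscal a (vscal b x) = vscal (a * b) x;
  vscal_distr_l : forall a x y, vscal a (vadd x y) = vadd (vscal a x) (vscal a y);
  vscal_distr_r : forall a b x, vscal (a + b) x = vadd (vscal a x) (vscal b x);
  vnorm_eq0 : forall x, vnorm x = 0 -> x = vzero;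
  vnorm_scal : forall a x, vnorm (vscal a x) = Rabs a * vnorm x;
  vnorm_triangle : forall x y, vnorm (vadd x y) <= vnorm x + vnorm y;
  vcomplete : forall u : nat -> car,
    (forall e, 0 < e -> exists N, forall m n, (N <= m)%nat -> (N <= n)%nat ->
        vnorm (vadd (u m) (vopp (u n))) < e) ->
    exists l, forall e, 0 < e -> exists N, forall n, (N <= n)%nat ->
        vnorm (vadd (u n) (vopp l)) < e
}.

Arguments vadd {b} : rename. Arguments vopp {b} : rename. Arguments vscal {b} : rename. Arguments vnorm {b} : rename.
Arguments vzero {b} : rename.

Definition dual (X : Banach) (f : X -> R) : Prop :=
  (forall x y, f (vadd x y) = f x + f y) /\
  (forall a x, f (vscal a x) = a * f x) /\
  (exists c, forall x, Rabs (f x) <= c * vnorm x).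

Definition dnorm_le (X : Banach) (f : X -> R) (c : R) : Prop :=
  forall x, Rabs (f x) <= c * vnorm x.

Definition dball (X : Banach) (f : X -> R) : Prop := dual X f /\ dnorm_le X f 1.

Definition bounded_linear (X Z : Banach) (T : X -> Z) : Prop :=
  (forall x y, T (vadd x y) = vadd (T x) (T y)) /\
  (forall a x, T (vscal a x) = vscal a (T x)) /\
  (exists c, forall x, vnorm (T x) <= c * vnorm x).

Definition closed_subspace (X : Banach) (Y : (X -> R) -> Prop) : Prop :=
  (forall f, Y f -> dual X f) /\
  Y (fun _ => 0) /\
  (forall f g, Y f -> Y g -> Y (fun x => f x + g x)) /\
  (forall a f, Y f -> Y (fun x => a * f x)) /\
  (forall f, dual X f ->
     (forall e, 0 < e -> exists g, Y g /\ dnorm_le X (fun x => f x - g x) e) ->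
     Y f).

Definition adj (X Z : Banach) (T : X -> Z) (g : Z -> R) : X -> R := fun x => g (T x).

(** T^star is an isometric isomorphism from Z^star onto Y (isometry: equal dual norms,
    i.e. the same sets of admissible bounds; linearity of T^star is automatic). *)
Definition adj_isometric_onto (X Z : Banach) (T : X -> Z) (Y : (X -> R) -> Prop) : Prop :=
  (forall g, dual Z g -> Y (adj X Z T g) /\
      (forall c, dnorm_le X (adj X Z T g) c <-> dnorm_le Z g c)) /\
  (forall f, Y f -> exists g, dual Z g /\ forall x, f x = adj X Z T g x).

Definition slice (X : Banach) (K : (X -> R) -> Prop) (w : X) (t : R) : (X -> R) -> Prop :=
  fun f => K f /\ f w > t.

Definition diam_lt (X : Banach) (S : (X -> R) -> Prop) (eps : R) : Prop :=
  exists d, d < eps /\ forall f g, S f -> S g -> dnorm_le X (fun x => f x - g x) d.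

Definition deriv (X : Banach) (eps : R) (K : (X -> R) -> Prop) : (X -> R) -> Prop :=
  fun f => K f /\ forall w t, f w > t -> ~ diam_lt X (slice X K w t) eps.

(** Ordinals as Brouwer trees with limits over arbitrary index types. *)
Inductive Ord : Type :=
| OZ : Ord
| OS : Ord -> Ord
| OL : forall I : Type, (I -> Ord) -> Ord.

(** Transfinite derivation d_eps^beta K; a limit node gives the intersection
    (together with K, so that an empty family gives d^0 K = K). *)
Fixpoint dit (X : Banach) (eps : R) (K : (X -> R) -> Prop) (b : Ord) : (X -> R) -> Prop :=
  match b with
  | OZ => K
  | OS b' => deriv X eps (dit X eps K b')
  | OL J f => fun g => K g /\ forall i, dit X eps K (f i) g
  end.

Fixpoint oadd (a b : Ord) : Ord :=
  match b with
  | OZ => a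
  | OS b' => OS (oadd a b')
  | OL J f => OL (option J) (fun o => match o with None => a | Some i => oadd a (f i) end)
  end.

From Stdlib Require Import Reals Lra.
Open Scope R_scope.

(* The adjoint T^* g = g o T transports weak^*-slices backwards:
   the slice of a set K of Z^* cut by (T x, t) is mapped by T^* into the slice
   cut by (x, t) of any set containing T^* K, because (T^* g)(x) = g(T x).
   Since T^* is isometric, a slice of small diameter downstairs would give one
   of small diameter upstairs; hence T^* maps d_eps K into d_eps L whenever it
   maps K into L ([deriv_adj]).  The theorem is then a transfinite induction
   on beta ([adj_dit]): the base case is the hypothesis on alpha, since T^*
   maps B_{Z^*} into B_{X^*} ∩ Y ([adj_dball]); successors use [deriv_adj];
   limits are intersections, whose extra term d^alpha is again the base case. *)

Lemma dit_sub (X : Banach) (eps : R) (K : (X -> R) -> Prop) (b : Ord) (g : X -> R) :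
  dit X eps K b g -> K g.
Proof.
  revert g; induction b as [|b IH|J f IH]; simpl; intros g H.
  - exact H.
  - exact (IH g (proj1 H)).
  - exact (proj1 H).
Qed.

Lemma dual_sub (Z : Banach) (g1 g2 : Z -> R) :
  dual Z g1 -> dual Z g2 -> dual Z (fun z => g1 z - g2 z).
Proof.
  intros [A1 [S1 [c1 B1]]] [A2 [S2 [c2 B2]]]. split; [|split].
  - intros x y. rewrite A1, A2. ring.
  - intros a x. rewrite S1, S2. ring.
  - exists (c1 + c2). intros x. unfold Rminus.
    eapply Rle_trans; [apply Rabs_triang|].
    rewrite Rabs_Ropp. specialize (B1 x). specialize (B2 x). lra.
Qed.

Section AdjointDerivation.

Variables (X Z : Banach) (T : X -> Z) (Y : (X -> R) -> Prop) (eps : R).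
Hypothesis Y_dual : forall f, Y f -> dual X f.
Hypothesis T_iso : forall g, dual Z g -> Y (adj X Z T g) /\
  (forall c, dnorm_le X (adj X Z T g) c <-> dnorm_le Z g c).

Lemma adj_dball (g : Z -> R) : dball Z g -> dball X (adj X Z T g) /\ Y (adj X Z T g).
Proof.
  intros [Dg Ng]. destruct (T_iso g Dg) as [Yg Hnorm].
  split; [split|exact Yg].
  - exact (Y_dual _ Yg).
  - exact (proj2 (Hnorm 1) Ng).
Qed.

(* Isometry of T^* applied to a difference: the bound on T^* g1 - T^* g2
   transfers back to g1 - g2 (T^* is linear, so this is T^*(g1 - g2)). *)
Lemma adj_dnorm_sub (g1 g2 : Z -> R) (d : R) : dual Z g1 -> dual Z g2 ->
  dnorm_le X (fun x => adj X Z T g1 x - adj X Z T g2 x) d ->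
  dnorm_le Z (fun z => g1 z - g2 z) d.
Proof.
  intros D1 D2. exact (proj1 (proj2 (T_iso _ (dual_sub Z g1 g2 D1 D2)) d)).
Qed.

(* One derivation step: if T^* maps K ⊆ Z^* into L, it maps d_eps K into
   d_eps L, since T^* sends the slice of K cut by (T x, t) into the slice of L
   cut by (x, t) without shrinking distances. *)
Lemma deriv_adj (K : (Z -> R) -> Prop) (L : (X -> R) -> Prop) (g : Z -> R) :
  (forall h, K h -> dual Z h) ->
  (forall h, K h -> L (adj X Z T h)) ->
  deriv Z eps K g -> deriv X eps L (adj X Z T g).
Proof.
  intros K_dual K_L [Kg g_point]. split; [exact (K_L g Kg)|].
  intros x t gxt [d [d_lt small_slice]].
  apply (g_point (T x) t gxt). exists d. split; [exact d_lt|].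
  intros h1 h2 [K1 h1t] [K2 h2t].
  apply (adj_dnorm_sub h1 h2 d (K_dual h1 K1) (K_dual h2 K2)).
  apply small_slice; split; [exact (K_L h1 K1)|exact h1t|exact (K_L h2 K2)|exact h2t].
Qed.

Lemma adj_dit (alpha : Ord) :
  (forall f, dball X f -> Y f -> dit X eps (dball X) alpha f) ->
  forall (beta : Ord) (g : Z -> R),
    dit Z eps (dball Z) beta g -> dit X eps (dball X) (oadd alpha beta) (adj X Z T g).
Proof.
  intros base beta. induction beta as [|b IH|J f IH]; intros g Hg; simpl in *.
  - destruct (adj_dball g Hg) as [Bg Yg]. exact (base _ Bg Yg).
  - apply (deriv_adj (dit Z eps (dball Z) b)); [|exact IH|exact Hg].
    intros h Hh. exact (proj1 (dit_sub Z eps (dball Z) b h Hh)).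
  - destruct Hg as [Bg Hi]. destruct (adj_dball g Bg) as [BXg Yg].
    split; [exact BXg|].
    intros [i|].
    + exact (IH i g (Hi i)).
    + exact (base _ BXg Yg).
Qed.

End AdjointDerivation.

Theorem mainTheorem5 (X Z : Banach) (Y : (X -> R) -> Prop) (T : X -> Z)
  (eps : R) (alpha : Ord) :
  closed_subspace X Y ->
  bounded_linear X Z T ->
  adj_isometric_onto X Z T Y ->
  0 < eps ->
  (forall f, dball X f -> Y f -> dit X eps (dball X) alpha f) ->
  forall (beta : Ord) (z : Z -> R),
    dual Z z ->
    dit Z eps (dball Z) beta z ->
    dit X eps (dball X) (oadd alpha beta) (adj X Z T z).
Proof.
  intros [Y_dual _] _ [T_iso _] _ base beta z _ Hz.
  exact (adj_dit X Z T Y eps Y_dual T_iso alpha base beta z Hz).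
Qed.
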